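(* Let $a_{n,k}$ denote the number of matchings of size $n$ containing exactly $k$ occurrences of the endhered pattern $21$ (equivalently, the same numbers for the pattern $12$), with $a_{n,k}$ defined for all integers $k$. Then for $n\ge1$ and all integers $k$, $$a_{n+1,k}=a_{n,k-1}+2(n-k)\,a_{n,k}+2(k+1)\,a_{n,k+1},$$ with $a_{1,0}=1$ and $a_{1,k}=0$ for $k\ne 0$. In particular $a_{n,k}=0$ whenever $k<0$.
   Context: A matching of size $n$ is a set of $n$ arcs $(a,b)$ with $1\le a<b\le 2n$ such that each point of $\{1,\dots,2n\}$ belongs to exactly one arc. An occurrence of the endhered pattern $21$ in a matching $\mu$ is a pair of arcs of $\mu$ of the form $(i+1,j+2),(i+2,j+1)$ (two nested arcs whose starting points are consecutive and whose ending points are consecutive); an occurrence of $12$ is a pair of arcs of the form $(i+1,j+1),(i+2,j+2)$ (two crossing arcs with consecutive starting points and consecutive ending points). The number of occurrences is the number of such pairs. *)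

From HB Require Import structures.
From mathcomp Require Import all_boot all_order all_algebra.
Set Implicit Arguments. Unset Strict Implicit. Unset Printing Implicit Defensive.
Import Order.TTheory GRing.Theory Num.Theory.

(* Points {1,...,2n} are represented (shifted by one) as 'I_(2n) = {0,...,2n-1};
   the patterns are shift-invariant.  An arc (a,b) is a pair with a < b. *)
Definition arc_type (n : nat) : finType := ('I_(2 * n) * 'I_(2 * n))%type.

Definition is_matching (n : nat) (M : {set arc_type n}) : bool :=
  [forall p in M, (p.1 < p.2)%N] &&
  [forall x : 'I_(2 * n),
     #|[set p in M | (p.1 == x) || (p.2 == x)]| == 1%N].

(* occurrences of 21: arcs (i+1,j+2),(i+2,j+1) *)
Definition occ21 (n : nat) (M : {set arc_type n}) : nat :=
  #|[set pq : arc_type n * arc_type n |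
      [&& pq.1 \in M, pq.2 \in M,
          (val pq.2.1 == (val pq.1.1).+1) & ((val pq.2.2).+1 == val pq.1.2)]]|.

(* occurrences of 12: arcs (i+1,j+1),(i+2,j+2) *)
Definition occ12 (n : nat) (M : {set arc_type n}) : nat :=
  #|[set pq : arc_type n * arc_type n |
      [&& pq.1 \in M, pq.2 \in M,
          (val pq.2.1 == (val pq.1.1).+1) & (val pq.2.2 == (val pq.1.2).+1)]]|.

Definition a21 (n : nat) (k : int) : nat :=
  #|[set M : {set arc_type n} | is_matching M && (Posz (occ21 M) == k)]|.

Definition a12 (n : nat) (k : int) : nat :=
  #|[set M : {set arc_type n} | is_matching M && (Posz (occ12 M) == k)]|.

(* Deleting the arc at the first point of a matching on m + 2 points leaves a matching
   on m points together with the gap (one of m + 1) that held the right end of the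
   deleted arc, and this is a bijection. Fix the smaller matching, with c occurrences,
   and reinsert the arc into each gap. Exactly one gap, determined by the arc at the old
   first point, creates an occurrence with the new arc. A gap destroys an occurrence when
   it separates its two left ends or its two right ends: each occurrence is destroyed by
   two gaps, no gap destroys two occurrences, and the creating gap destroys none. Hence
   c + 1, c - 1 and c occurrences arise for 1, 2c and m - 2c gaps respectively, and
   summing over matchings with m = 2n gives the recurrence. *)

From mathcomp Require Import all_boot all_order all_algebra.
From mathcomp Require Import zify ring.
Set Implicit Arguments. Unset Strict Implicit. Unset Printing Implicit Defensive.
Import Order.TTheory GRing.Theory Num.Theory.

(* [matching], [occurrences] and [count_matchings] are [is_matching], [occ21]/[occ12]
   and [a21]/[a12] for an arbitrary number [m] of points (they agree by conversion
   when [m = 2 * n]); [nested] selects the pattern 21, [~~ nested] the pattern 12. *)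
Section Matchings.
Variable m : nat.
Implicit Types (M : {set 'I_m * 'I_m}) (p q : 'I_m * 'I_m).

Definition matching M : bool :=
  [forall p in M, (p.1 < p.2)%N] &&
  [forall x : 'I_m, #|[set p in M | (p.1 == x) || (p.2 == x)]| == 1%N].

Definition occurrences (nested : bool) M : {set ('I_m * 'I_m) * ('I_m * 'I_m)} :=
  [set pq | [&& pq.1 \in M, pq.2 \in M, val pq.2.1 == (val pq.1.1).+1 &
     if nested then (val pq.2.2).+1 == val pq.1.2 else val pq.2.2 == (val pq.1.2).+1]].

Definition count_matchings nested (k : int) : nat :=
  #|[set M | matching M && (Posz #|occurrences nested M| == k)]|.

Lemma mem_occurrence_arcs nested M p q :
  (p, q) \in occurrences nested M -> p \in M /\ q \in M.
Proof. by rewrite inE => /and3P[]. Qed.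

Lemma matching_ltn M p : matching M -> p \in M -> (p.1 < p.2)%N.
Proof. by case/andP => /forallP/(_ p)/implyP. Qed.

Lemma matching_arc_uniq M (x : nat) p q : matching M -> p \in M -> q \in M ->
  (p.1 == x :> nat) || (p.2 == x :> nat) -> (q.1 == x :> nat) || (q.2 == x :> nat) ->
  p = q.
Proof.
move=> /andP[_ /forallP cover] pM qM px qx.
have [y xy] : exists y : 'I_m, x = y by case/orP: px => /eqP <-; eexists.
subst x.
have /card_le1_eqP := eq_leq (eqP (cover y)); apply; by rewrite inE ?pM ?qM.
Qed.

Lemma matching_arc_exists M (x : 'I_m) : matching M ->
  exists2 p, p \in M & (p.1 == x) || (p.2 == x).
Proof.
case/andP => _ /forallP/(_ x)/eqP cover.
have /card_gt0P[p] : (0 < #|[set p in M | (p.1 == x) || (p.2 == x)]|)%N by rewrite cover.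
by rewrite inE => /andP[]; exists p.
Qed.

End Matchings.

Section Insertion.
Variable m : nat.
Implicit Types (M : {set 'I_m * 'I_m}) (p : 'I_m * 'I_m).

(* Gap [g] lies between the old points [g - 1] and [g]. The new arc joins a new first
   point to a new point placed in that gap; the old points are shifted past both. *)
Section Gap.
Variable g : 'I_m.+1.

Definition relabel (z : 'I_m) : 'I_m.+2 := lift ord0 (lift g z).
Definition relabel_arc p : 'I_m.+2 * 'I_m.+2 := (relabel p.1, relabel p.2).
Definition new_arc : 'I_m.+2 * 'I_m.+2 := (ord0, lift ord0 g).
Definition insert_arc M := new_arc |: (relabel_arc @: M).

Lemma val_relabel z : relabel z = (if (g <= z)%N then z.+2 else z.+1) :> nat.
Proof. by rewrite /relabel /= /bump leq0n; case: leqP. Qed.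

Lemma relabel_inj : injective relabel.
Proof. by move=> x y /lift_inj/lift_inj. Qed.

Lemma relabel_arc_inj : injective relabel_arc.
Proof.
move=> [a b] [c d]; rewrite /relabel_arc /=.
by move=> /pair_equal_spec[/relabel_inj-> /relabel_inj->].
Qed.

Lemma ltn_relabel x y : (relabel x < relabel y)%N = (x < y)%N.
Proof.
by rewrite !val_relabel; case: (leqP g x); case: (leqP g y) => *; apply/idP/idP; lia.
Qed.

Lemma relabel_neq0 z : relabel z != 0 :> nat.
Proof. by rewrite val_relabel; case: ifP. Qed.

Lemma relabel_neq_new z : relabel z != g.+1 :> nat.
Proof. by rewrite val_relabel; case: leqP => *; lia. Qed.

Lemma relabel_surj (x : 'I_m.+2) : x != 0 :> nat -> x != g.+1 :> nat ->
  exists z, x = relabel z.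
Proof.
case: (unliftP ord0 x) => [y ->|->] //= _.
case: (unliftP g y) => [z ->|->]; first by exists z.
by rewrite /= /bump leq0n eqxx.
Qed.

Lemma relabel_arc_neq_new p : relabel_arc p != new_arc.
Proof. by apply/eqP => -[/eqP]; rewrite (negbTE (relabel_neq0 _)). Qed.

Lemma mem_insert_relabel M p : (relabel_arc p \in insert_arc M) = (p \in M).
Proof.
by rewrite in_setU1 (negbTE (relabel_arc_neq_new p)) (mem_imset _ _ relabel_arc_inj).
Qed.

Lemma new_arc_in_insert M : new_arc \in insert_arc M.
Proof. exact: setU11. Qed.

Lemma new_arc_notin_relabel M : new_arc \notin relabel_arc @: M.
Proof. by apply/imsetP => -[p _ /esym/eqP]; rewrite (negbTE (relabel_arc_neq_new p)). Qed.

Lemma insert_arc_cases M q : q \in insert_arc M ->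
  q = new_arc \/ exists2 p, p \in M & q = relabel_arc p.
Proof. by case/setU1P => [|/imsetP]; [left | right]. Qed.

Lemma arcs_at_new M (x : 'I_m.+2) : (x == 0 :> nat) || (x == g.+1 :> nat) ->
  [set q in insert_arc M | (q.1 == x) || (q.2 == x)] = [set new_arc].
Proof.
move=> x_new; apply/setP => q; rewrite in_set in_set1; apply/idP/idP.
- case/andP => /insert_arc_cases[-> // | [p _ ->]] /orP[]/eqP x_relabel; move: x_new;
    by rewrite -x_relabel (negbTE (relabel_neq0 _)) (negbTE (relabel_neq_new _)).
- move/eqP->; rewrite new_arc_in_insert.
  by case/orP: x_new => /eqP x_val; apply/orP; [left | right]; apply/eqP/val_inj.
Qed.

Lemma arcs_at_relabel M z :
  [set q in insert_arc M | (q.1 == relabel z) || (q.2 == relabel z)] =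
  relabel_arc @: [set p in M | (p.1 == z) || (p.2 == z)].
Proof.
apply/setP => q; rewrite in_set; apply/idP/imsetP.
- case/andP => /insert_arc_cases[-> | [p pM ->]] /=.
  + by move/eqP => /(congr1 val)/eqP; rewrite eq_sym (negbTE (relabel_neq_new z)).
  + by rewrite !(inj_eq relabel_inj) => pz; exists p; rewrite // inE pM.
- case=> p; rewrite inE => /andP[pM pz] ->.
  by rewrite mem_insert_relabel pM /= !(inj_eq relabel_inj).
Qed.

Lemma matching_insert M : matching (insert_arc M) = matching M.
Proof.
congr andb; apply/forallP/forallP => every.
- by move=> p; have := every (relabel_arc p); rewrite mem_insert_relabel /= ltn_relabel.
- move=> q; apply/implyP => /insert_arc_cases[-> // | [p pM ->]].
  by rewrite /= ltn_relabel (implyP (every p)).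
- move=> z; have := every (relabel z).
  by rewrite arcs_at_relabel card_imset //; apply: relabel_arc_inj.
- move=> x; have [x_new | ] := boolP ((x == 0 :> nat) || (x == g.+1 :> nat)).
    by rewrite arcs_at_new // cards1.
  rewrite negb_or => /andP[x0 xg]; have [z ->] := relabel_surj x0 xg.
  by rewrite arcs_at_relabel card_imset //; apply: relabel_arc_inj.
Qed.

End Gap.

Lemma insert_arc_surj (M' : {set 'I_m.+2 * 'I_m.+2}) : matching M' ->
  exists g M, M' = insert_arc g M.
Proof.
move=> M'match; have [e eM' e0] := matching_arc_exists (ord0 : 'I_m.+2) M'match.
have e_lt := matching_ltn M'match eM'.
have e1 : e.1 = ord0 by case/orP: e0 => /eqP // e2; move: e_lt; rewrite e2 ltn0.
case: (unliftP ord0 e.2) => [g e2 | e2]; last by move: e_lt; rewrite e1 e2 ltnn.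
have {e0 e_lt e1 e2} e_new : e = new_arc g by rewrite [e]surjective_pairing e1 e2.
subst e.
have at_new q (x : nat) : q \in M' -> (q.1 == x :> nat) || (q.2 == x :> nat) ->
    (x == 0) || (x == g.+1) -> q = new_arc g.
  move=> qM' qx /orP[]/eqP x_new; subst x;
    by apply: matching_arc_uniq M'match qM' eM' qx _; rewrite /= ?eqxx ?orbT.
exists g, [set p | relabel_arc g p \in M']; apply/setP => q; apply/idP/setU1P.
- move=> qM'; have [/orP[] q_new | ] := boolP
    (((q.1 == 0 :> nat) || (q.2 == 0 :> nat)) ||
     ((q.1 == g.+1 :> nat) || (q.2 == g.+1 :> nat))).
  + by left; apply: at_new qM' q_new _.
  + by left; apply: at_new qM' q_new _; rewrite eqxx orbT.
  rewrite !negb_or => /andP[/andP[q10 q20] /andP[q1g q2g]]; right.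
  have [[z1 q1] [z2 q2]] := (relabel_surj q10 q1g, relabel_surj q20 q2g).
  have q_eq : q = relabel_arc g (z1, z2) by rewrite /relabel_arc -q1 -q2 -surjective_pairing.
  by apply/imsetP; exists (z1, z2); rewrite // inE -q_eq.
- by case=> [-> // | /imsetP[p]]; rewrite inE => pM' ->.
Qed.

Lemma insert_arc_inj :
  injective (fun Mg : {set 'I_m * 'I_m} * 'I_m.+1 => insert_arc Mg.2 Mg.1).
Proof.
move=> [M g] [M' g'] /= eq_ins.
have : new_arc g \in insert_arc g' M' by rewrite -eq_ins new_arc_in_insert.
case/insert_arc_cases => [/pair_equal_spec[_ /lift_inj g_eq] | [p _]]; last first.
  by move=> /(congr1 (val \o fst))/eqP; rewrite /= eq_sym (negbTE (relabel_neq0 _ _)).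
subst g'; congr pair; apply: (imset_inj (@relabel_arc_inj g)).
rewrite -[relabel_arc g @: M](setU1K (new_arc_notin_relabel g M)).
rewrite -[relabel_arc g @: M'](setU1K (new_arc_notin_relabel g M')).
by move: eq_ins; rewrite /insert_arc => ->.
Qed.

Lemma count_matchings_insert nested k : count_matchings m.+2 nested k =
  \sum_(M | matching M)
     #|[set g : 'I_m.+1 | Posz #|occurrences nested (insert_arc g M)| == k]|.
Proof.
rewrite /count_matchings.
pose good (Mg : {set 'I_m * 'I_m} * 'I_m.+1) :=
  matching Mg.1 && (Posz #|occurrences nested (insert_arc Mg.2 Mg.1)| == k).
have -> : [set M' | matching M' && (Posz #|occurrences nested M'| == k)] =
          (fun Mg => insert_arc Mg.2 Mg.1) @: [set Mg | good Mg].
  apply/setP => M'; rewrite inE; apply/andP/imsetP.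
  - case=> M'match M'k; have [g [M M'E]] := insert_arc_surj M'match.
    by exists (M, g); rewrite // inE /good /= -(matching_insert g) -M'E M'match M'k.
  - case=> -[M g]; rewrite inE /good /= => /andP[Mmatch Mk] ->.
    by rewrite matching_insert.
rewrite card_imset; last exact: insert_arc_inj.
rewrite -sum1dep_card; under [RHS]eq_bigr do rewrite -sum1dep_card.
by rewrite pair_big_dep.
Qed.

End Insertion.

Section Occurrences.
Variables (m : nat) (nested : bool) (g : 'I_m.+1).
Implicit Types (M : {set 'I_m * 'I_m}) (a b : 'I_m * 'I_m).
Implicit Types (pq : ('I_m * 'I_m) * ('I_m * 'I_m)).

(* [(new_arc g, relabel_arc g a)] is an occurrence. *)
Definition gap_creates a : bool :=
  [&& a.1 == 0 :> nat, (0 < g)%N & if nested then a.2.+1 == g :> nat else a.2 == g :> nat].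

(* Gap [g] lies between the two left ends or between the two right ends of [pq]. *)
Definition gap_splits pq : bool :=
  (pq.2.1 == g :> nat) || ((if nested then pq.1.2 else pq.2.2) == g :> nat).

Definition relabel_pair pq := (relabel_arc g pq.1, relabel_arc g pq.2).

Lemma relabel_pair_inj : injective relabel_pair.
Proof.
move=> [a b] [c d]; rewrite /relabel_pair /=.
by move=> /pair_equal_spec[/relabel_arc_inj-> /relabel_arc_inj->].
Qed.

Lemma mem_occurrences_new_fst M a :
  ((new_arc g, relabel_arc g a) \in occurrences nested (insert_arc g M)) =
  (a \in M) && gap_creates a.
Proof.
rewrite in_set /= new_arc_in_insert mem_insert_relabel /gap_creates /=.
case: (a \in M) => //=; rewrite /bump !leq0n !add1n.
by case: nested; case: (leqP g a.1); case: (leqP g a.2) => *; apply/idP/idP; lia.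
Qed.

Lemma mem_occurrences_relabel M a b :
  ((relabel_arc g a, relabel_arc g b) \in occurrences nested (insert_arc g M)) =
  ((a, b) \in occurrences nested M) && ~~ gap_splits (a, b).
Proof.
rewrite [LHS]in_set [in RHS]in_set /= !mem_insert_relabel /gap_splits /=.
case: (a \in M) (b \in M) => [] [] //=; rewrite /bump !leq0n !add1n.
by case: nested; case: (leqP g a.1); case: (leqP g a.2); case: (leqP g b.1);
  case: (leqP g b.2) => *; apply/idP/idP; lia.
Qed.

Lemma mem_occurrences_new_snd M p :
  ((p, new_arc g) \in occurrences nested (insert_arc g M)) = false.
Proof. by rewrite inE /= !andbF. Qed.

Lemma occurrences_insert_new_fst M :
  occurrences nested (insert_arc g M) :&: [set pq | pq.1 == new_arc g] =
  (fun a => (new_arc g, relabel_arc g a)) @: (M :&: [set a | gap_creates a]).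
Proof.
apply/setP => -[p q]; rewrite in_setI [X in _ && X]in_set /=; apply/andP/imsetP.
- case=> pq_occ /eqP p_new; subst p.
  have [_ /insert_arc_cases[q_new | [b bM q_b]]] := mem_occurrence_arcs pq_occ.
    by rewrite q_new mem_occurrences_new_snd in pq_occ.
  rewrite q_b mem_occurrences_new_fst in pq_occ.
  by exists b; rewrite ?q_b // !inE.
- case=> b b_creates [-> ->]; rewrite !inE in b_creates.
  by rewrite mem_occurrences_new_fst b_creates.
Qed.

Lemma occurrences_insert_old_fst M :
  occurrences nested (insert_arc g M) :\: [set pq | pq.1 == new_arc g] =
  relabel_pair @: (occurrences nested M :\: [set pq | gap_splits pq]).
Proof.
apply/setP => -[p q]; rewrite in_setD [X in ~~ X && _]in_set /=; apply/andP/imsetP.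
- case=> p_old pq_occ; have [pM qM] := mem_occurrence_arcs pq_occ.
  case/insert_arc_cases: pM p_old pq_occ => [-> | [a aM ->]]; first by rewrite eqxx.
  case/insert_arc_cases: qM => [-> | [b bM ->]] _; first by rewrite mem_occurrences_new_snd.
  rewrite mem_occurrences_relabel => ab_occ.
  by exists (a, b); rewrite // in_setD [X in ~~ X && _]in_set andbC.
- case=> -[a b] ab_occ /pair_equal_spec[-> ->].
  rewrite in_setD [X in ~~ X && _]in_set in ab_occ.
  by rewrite relabel_arc_neq_new mem_occurrences_relabel andbC.
Qed.

Lemma card_occurrences_insert M :
  #|occurrences nested (insert_arc g M)| =
  #|[set a in M | gap_creates a]| +
  (#|occurrences nested M| - #|[set pq in occurrences nested M | gap_splits pq]|).
Proof.
rewrite -(cardsID [set pq | pq.1 == new_arc g]).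
rewrite occurrences_insert_new_fst occurrences_insert_old_fst.
rewrite card_imset; last by move=> a b /pair_equal_spec[_ /relabel_arc_inj].
by rewrite card_imset ?cardsD -?setIdE //; apply: relabel_pair_inj.
Qed.

End Occurrences.

Section GapCounts.
Variables (m : nat) (nested : bool) (M : {set 'I_m * 'I_m}).
Hypothesis M_matching : matching M.

Lemma occurrence_ltn p q : (p, q) \in occurrences nested M ->
  [/\ (p.1 < p.2)%N, (q.1 < q.2)%N, q.1 = p.1.+1 :> nat &
      if nested then q.2.+1 = p.2 :> nat else q.2 = p.2.+1 :> nat].
Proof.
move=> pq_occ; have [pM qM] := mem_occurrence_arcs pq_occ.
rewrite !(matching_ltn M_matching) //; move: pq_occ; rewrite inE => /and4P[_ _ /eqP -> ].
by case: nested => /eqP.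
Qed.

Lemma occurrence_fst_inj p q q' : (p, q) \in occurrences nested M ->
  (p, q') \in occurrences nested M -> q = q'.
Proof.
move=> pq_occ pq'_occ.
have [[_ qM] [_ q'M]] := (mem_occurrence_arcs pq_occ, mem_occurrence_arcs pq'_occ).
have [[_ _ q1 _] [_ _ q'1 _]] := (occurrence_ltn pq_occ, occurrence_ltn pq'_occ).
by apply: (matching_arc_uniq (x := p.1.+1) M_matching qM q'M); rewrite ?q1 ?q'1 eqxx.
Qed.

Lemma occurrence_snd_inj p p' q : (p, q) \in occurrences nested M ->
  (p', q) \in occurrences nested M -> p = p'.
Proof.
move=> pq_occ p'q_occ.
have [[pM _] [p'M _]] := (mem_occurrence_arcs pq_occ, mem_occurrence_arcs p'q_occ).
have [[_ _ q1 _] [_ _ q1' _]] := (occurrence_ltn pq_occ, occurrence_ltn p'q_occ).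
have p'1 : p'.1 = p.1 :> nat by apply: succn_inj; rewrite -q1 -q1'.
by apply: (matching_arc_uniq (x := p.1) M_matching pM p'M); rewrite ?p'1 eqxx.
Qed.

Lemma card_gap_creates : (0 < m)%N ->
  exists t : 'I_m.+1, forall g, #|[set a in M | gap_creates nested g a]| = (g == t).
Proof.
move=> m_gt0; have [a0 a0M a0_0] := matching_arc_exists (Ordinal m_gt0) M_matching.
have a0_lt := matching_ltn M_matching a0M.
have a0_1 : a0.1 == 0 :> nat by case/orP: a0_0 => /eqP a0E; move: a0_lt; rewrite a0E.
have a0_2 := ltn_ord a0.2.
exists (inord (if nested then a0.2.+1 else a0.2)) => g.
have creates_a0 a : a \in M -> gap_creates nested g a -> a = a0.
  move=> aM /and3P[a_1 _ _].
  by apply: (matching_arc_uniq (x := 0) M_matching aM a0M); rewrite ?a_1 ?a0_1.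
have -> : [set a in M | gap_creates nested g a] =
          if gap_creates nested g a0 then [set a0] else set0.
  apply/setP => a; rewrite in_set; case: ifP => a0_creates.
    by rewrite in_set1; apply/andP/eqP => [[aM /creates_a0->] | ->].
  rewrite in_set0; apply/andP => -[aM a_creates].
  by move: a0_creates; rewrite -(creates_a0 a aM a_creates) a_creates.
have -> : gap_creates nested g a0 = (g == inord (if nested then a0.2.+1 else a0.2)).
  rewrite /gap_creates -val_eqE /= inordK; last by case: nested; rewrite ltnS // ltnW.
  rewrite a0_1 /=; case: nested; rewrite eq_sym; case: eqP; rewrite ?andbF // => -> //.
  by rewrite andbT (leq_ltn_trans _ a0_lt).
by case: eqP; rewrite ?cards1 ?cards0.
Qed.

Lemma card_gap_splits_le1 g :
  (#|[set pq in occurrences nested M | gap_splits nested g pq]| <= 1)%N.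
Proof.
apply/card_le1_eqP => -[p q] [p' q'].
rewrite in_set [in X in _ -> X]in_set /gap_splits /=.
move=> /andP[pq_occ splits] /andP[pq'_occ splits'].
have [[pM qM] [p'M q'M]] := (mem_occurrence_arcs pq_occ, mem_occurrence_arcs pq'_occ).
have [[ltp ltq q1 q2] [ltp' ltq' q1' q2']] := (occurrence_ltn pq_occ, occurrence_ltn pq'_occ).
have at_g r r' : r \in M -> r' \in M -> (r.1 == g :> nat) || (r.2 == g :> nat) ->
    (r'.1 == g :> nat) || (r'.2 == g :> nat) -> r = r'.
  exact: matching_arc_uniq.
suff [q_eq | p_eq] : q = q' \/ p = p'.
- by rewrite -q_eq (occurrence_snd_inj pq_occ (_ : (p', q) \in _)) // q_eq.
- by rewrite -p_eq (occurrence_fst_inj pq_occ (_ : (p, q') \in _)) // p_eq.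
case: nested q2 q2' splits splits' => q2 q2' /orP[] /eqP g_eq /orP[] /eqP g_eq'.
- by left; apply: at_g; rewrite // ?g_eq ?g_eq' eqxx.
- have q_p' : q = p' by apply: at_g; rewrite // ?g_eq ?g_eq' eqxx ?orbT.
  by move: ltp'; rewrite g_eq' -q_p' g_eq ltnn.
- have p_q' : p = q' by apply: at_g; rewrite // ?g_eq ?g_eq' eqxx ?orbT.
  by move: ltp; rewrite g_eq p_q' g_eq' ltnn.
- by right; apply: at_g; rewrite // ?g_eq ?g_eq' eqxx ?orbT.
all: by left; apply: at_g; rewrite // ?g_eq ?g_eq' eqxx ?orbT.
Qed.

Lemma card_gaps_splitting p q : (p, q) \in occurrences nested M ->
  #|[set g : 'I_m.+1 | gap_splits nested g (p, q)]| = 2.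
Proof.
move=> pq_occ; have [_ ltq q1 q2] := occurrence_ltn pq_occ.
set w := if nested then p.2 else q.2.
have q1_w : q.1 < w by rewrite /w; case: nested q2 => [<- | _]; [apply: ltnW | ].
have [q1_lt w_lt] := (leqW (ltn_ord q.1), leqW (ltn_ord w)).
rewrite (_ : [set g | _] = [set inord q.1; inord w]) ?cards2.
- by rewrite -val_eqE /= !inordK // neq_ltn q1_w.
apply/setP => g; rewrite !inE /gap_splits /= -!val_eqE /= !inordK //.
by rewrite ![_ == (val g)]eq_sym.
Qed.

Lemma sum_card_gap_splits :
  \sum_(g : 'I_m.+1) #|[set pq in occurrences nested M | gap_splits nested g pq]| =
  (2 * #|occurrences nested M|)%N.
Proof.
under eq_bigr do rewrite -sum1dep_card.
rewrite (exchange_big_dep (mem (occurrences nested M))) /=; last by move=> g pq _ /andP[].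
rewrite -sum1_card big_distrr /=.
apply: eq_bigr => -[p q] pq_occ; rewrite muln1 -(card_gaps_splitting pq_occ) -sum1dep_card.
by apply: eq_bigl => g; rewrite pq_occ.
Qed.

Lemma gap_creates_no_split g a : a \in M -> gap_creates nested g a ->
  [set pq in occurrences nested M | gap_splits nested g pq] = set0.
Proof.
move=> aM /and3P[/eqP a1 _ a2]; have a_lt := matching_ltn M_matching aM.
apply/setP => -[p q]; rewrite in_set in_set0 /gap_splits /=.
apply/negP => /andP[pq_occ splits].
have [[pM qM] [ltp ltq q1 q2]] := (mem_occurrence_arcs pq_occ, occurrence_ltn pq_occ).
have at_a2 r : r \in M -> (r.1 == a.2 :> nat) || (r.2 == a.2 :> nat) -> r = a.
  by move=> rM ra; apply: matching_arc_uniq M_matching rM aM ra _; rewrite eqxx orbT.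
have q_neq_a : q <> a by move=> q_a; move: q1; rewrite q_a a1.
case: nested a2 q2 splits => /eqP a2 q2 /orP[] /eqP g_eq.
- have p1 : p.1 = a.2 :> nat by apply: succn_inj; rewrite -q1 g_eq a2.
  have p_a : p = a by apply: at_a2 pM _; rewrite p1 eqxx.
  by move: a_lt; rewrite -p1 p_a ltnn.
- have q2_a : q.2 = a.2 :> nat by apply: succn_inj; rewrite q2 g_eq a2.
  by apply: q_neq_a; apply: at_a2 qM _; rewrite q2_a eqxx orbT.
- by apply: q_neq_a; apply: at_a2 qM _; rewrite g_eq a2 eqxx.
- by apply: q_neq_a; apply: at_a2 qM _; rewrite g_eq a2 eqxx orbT.
Qed.

End GapCounts.

Local Open Scope ring_scope.

Lemma indicator_shift (c cr de : nat) (k : int) : (cr + de <= 1)%N -> (de <= c)%N ->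
  ((cr + (c - de))%N%:Z == k)%:R =
  cr%:R * (c%:Z == k - 1)%:R + de%:R * (c%:Z == k + 1)%:R
  + (1 - cr%:R - de%:R) * (c%:Z == k)%:R :> int.
Proof.
case: cr de => [|[|//]] [|[|//]] //= _ de_c.
- by rewrite add0n subn0; ring.
- have -> : ((0 + (c - 1))%N%:Z == k) = (c%:Z == k + 1) by apply/eqP/eqP; lia.
  by ring.
- have -> : ((1 + (c - 0))%N%:Z == k) = (c%:Z == k - 1) by apply/eqP/eqP; lia.
  by ring.
Qed.

Lemma card_set_indicator (R : pzSemiRingType) (T : finType) (P : pred T) :
  #|[set x | P x]|%:R = \sum_x (P x)%:R :> R.
Proof. by rewrite -sum1dep_card natr_sum big_mkcond; apply: eq_bigr => x _; case: (P x). Qed.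

Lemma card_gaps_with_occurrences m nested (M : {set 'I_m * 'I_m}) (k : int) :
  matching M -> (0 < m)%N ->
  #|[set g : 'I_m.+1 | #|occurrences nested (insert_arc g M)|%:Z == k]|%:R =
  (#|occurrences nested M|%:Z == k - 1)%:R
  + (m%:R - 2 * k) * (#|occurrences nested M|%:Z == k)%:R
  + 2 * (k + 1) * (#|occurrences nested M|%:Z == k + 1)%:R :> int.
Proof.
move=> M_matching m_gt0; set c := #|occurrences nested M|.
pose created g := #|[set a in M | gap_creates nested g a]|.
pose destroyed g := #|[set pq in occurrences nested M | gap_splits nested g pq]|.
have [t created_t] := card_gap_creates nested M_matching m_gt0.
have created_destroyed g : (created g + destroyed g <= 1)%N.
  have [-> | /card_gt0P[a]] := posnP (created g); first exact: card_gap_splits_le1.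
  rewrite in_set => /andP[aM a_creates].
  rewrite /destroyed (gap_creates_no_split M_matching aM a_creates) cards0 addn0.
  by rewrite /created created_t leq_b1.
have destroyed_le g : (destroyed g <= c)%N.
  by rewrite /destroyed setIdE subset_leq_card ?subsetIl.
have sum_created : (\sum_g created g = 1)%N.
  rewrite (bigD1 t) //= big1 ?addn0 /created ?created_t ?eqxx // => g /negbTE.
  by rewrite created_t => ->.
have sum_destroyed : (\sum_g destroyed g = 2 * c)%N := sum_card_gap_splits nested M_matching.
rewrite card_set_indicator.
under eq_bigr => g _ do
  rewrite card_occurrences_insert (indicator_shift _ (created_destroyed g) (destroyed_le g)).
rewrite !big_split /= -!mulr_suml !sumrB -!natr_sum sum_created sum_destroyed.
rewrite sumr_const card_ord.
have indicator_mul (j : int) : c%:R * (c%:Z == j)%:R = j * (c%:Z == j)%:R.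
  by rewrite natz; case: eqP => [-> | _]; rewrite ?mulr0.
by rewrite natrM mulrBl -!mulrA !indicator_mul; ring.
Qed.

Lemma sum_matchings_indicator m nested (j : int) :
  \sum_(M : {set 'I_m * 'I_m} | matching M) (#|occurrences nested M|%:Z == j)%:R =
  (count_matchings m nested j)%:R :> int.
Proof.
rewrite /count_matchings -sum1dep_card natr_sum [RHS]big_mkcondr /=.
by apply: eq_bigr => M _; case: eqP.
Qed.

Lemma count_matchings_rec m nested (k : int) : (0 < m)%N ->
  (count_matchings m.+2 nested k)%:R =
  (count_matchings m nested (k - 1))%:R
  + (m%:R - 2 * k) * (count_matchings m nested k)%:R
  + 2 * (k + 1) * (count_matchings m nested (k + 1))%:R :> int.
Proof.
move=> m_gt0; rewrite count_matchings_insert natr_sum.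
under eq_bigr => M M_matching do rewrite card_gaps_with_occurrences //.
by rewrite !big_split /= -!mulr_sumr !sum_matchings_indicator.
Qed.

Lemma count_matchings2 nested (k : int) : count_matchings 2 nested k = (k == 0).
Proof.
have empty (T : finType) (f : T -> 'I_0) (A : {set T}) : A = set0.
  by apply/setP => x; case: (f x).
rewrite count_matchings_insert (big_pred1 set0) => [|M]; last first.
  rewrite /= (empty _ (fst : 'I_0 * 'I_0 -> 'I_0) M) eqxx.
  by apply/andP; split; apply/forallP => -[[]].
have occ0 g : #|occurrences nested (insert_arc g (set0 : {set 'I_0 * 'I_0}))| = 0%N.
  rewrite card_occurrences_insert (empty _ fst [set a in _ | _]).
  by rewrite (empty _ (fst \o fst) (occurrences _ _)) !cards0.
under eq_finset => g do rewrite occ0.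
by rewrite eq_sym; case: (k == 0); rewrite ?cardsT ?card_ord ?cards0.
Qed.

Lemma count_matchings_neg m nested (k : int) : k < 0 -> count_matchings m nested k = 0%N.
Proof.
move=> k_lt0; apply/eqP; rewrite cards_eq0; apply/eqP/setP => M; rewrite !inE.
by case: eqP => [k_eq | _]; [move: k_lt0; rewrite -k_eq | rewrite andbF].
Qed.

Theorem theorem1 :
  (forall (a : nat -> int -> nat), (a = a21 \/ a = a12) ->
     (forall (n : nat) (k : int), (1 <= n)%N ->
        ((a n.+1 k)%:Z = (a n (k - 1))%:Z
                         + 2%:Z * (n%:Z - k) * (a n k)%:Z
                         + 2%:Z * (k + 1) * (a n (k + 1))%:Z))
     /\ a 1%N 0 = 1%N
     /\ (forall k : int, k != 0 -> a 1%N k = 0%N)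
     /\ (forall (n : nat) (k : int), k < 0 -> a n k = 0%N)).
Proof.
move=> a a_def.
have [nested a_count] : exists nested, forall n k, a n k = count_matchings (2 * n) nested k.
  by case: a_def => ->; [exists true | exists false].
split; [|split; [|split]].
- move=> n k n_gt0; rewrite !a_count -!natz mulnS count_matchings_rec ?muln_gt0 //.
  by rewrite natrM; ring.
- by rewrite a_count count_matchings2.
- by move=> k k_neq0; rewrite a_count count_matchings2 (negbTE k_neq0).
- by move=> n k k_lt0; rewrite a_count count_matchings_neg.
Qed.
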